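(* Let $d\ge1$, $N\ge1$ be integers, let $f:\{0,1\}^\ell\to\{0,1\}^{N+1}$ be $d$-local, and let $b$ satisfy $b^2\ge\frac14\big(1-(2d)^{-\ln 4}\big)$. Then for every function $g:\{0,1\}^N\to\{0,1\}$, $$\Delta\big(f(B_b^{\otimes\ell}),(X,g(X))\big)\ \ge\ \tfrac12-\tfrac1N,$$ where $X$ is uniform on $\{0,1\}^N$.
   Context: $B_b$ is the Bernoulli random variable equal to $0$ with probability $1/2+b$ and $1$ with probability $1/2-b$; $B_b^{\otimes\ell}$ denotes $\ell$ i.i.d. copies. A function is $d$-local if each output bit depends on at most $d$ input bits. $\Delta$ is total variation distance. *)

From HB Require Import structures.
From mathcomp Require Import all_boot all_order all_algebra.
From mathcomp Require Import reals exp.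
Set Implicit Arguments. Unset Strict Implicit. Unset Printing Implicit Defensive.
Import Order.TTheory GRing.Theory Num.Theory.
Local Open Scope ring_scope.

(* Bit strings {0,1}^n, with bit 0 = false, bit 1 = true. *)
Notation bits n := {ffun 'I_n -> bool}.

Definition local (l m d : nat) (f : bits l -> bits m) : Prop :=
  forall j : 'I_m, exists S : {set 'I_l}, (#|S| <= d)%N /\
    forall x x' : bits l, (forall i, i \in S -> x i = x' i) -> f x j = f x' j.

Definition bern_pmf {R : realType} (b : R) (c : bool) : R :=
  if c then 1/2 - b else 1/2 + b.

Definition push_bern {R : realType} (l m : nat) (b : R) (f : bits l -> bits m)
  (y : bits m) : R :=
  \sum_(x : bits l | f x == y) \prod_(i < l) bern_pmf b (x i).

(* The string (x, g x) in {0,1}^(N+1): last coordinate is g x. *)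
Definition append_bit (N : nat) (x : bits N) (c : bool) : bits N.+1 :=
  [ffun i : 'I_N.+1 => match unlift ord_max i with Some j => x j | None => c end].

Definition graph_law {R : realType} (N : nat) (g : bits N -> bool)
  (y : bits N.+1) : R :=
  \sum_(x : bits N | append_bit x (g x) == y) (2 ^+ N)^-1.

Definition tvd {R : realType} (T : finType) (P Q : T -> R) : R :=
  (1/2) * \sum_(t : T) `|P t - Q t|.

From HB Require Import structures.
From mathcomp Require Import all_boot all_order all_algebra.
From mathcomp Require Import reals sequences exp.
From mathcomp Require Import ring lra.
Import Order.TTheory GRing.Theory Num.Theory.
Set Implicit Arguments. Unset Strict Implicit.
Local Open Scope ring_scope.

(* Let c be the more likely value of B_b and z := f(c, ..., c).  Each output
   bit of f depends on at most d inputs, so it differs from the same bit of z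
   with probability at most d * p <= 1/8, where p := Pr[B_b <> c]: indeed
   4p(1 - p) = 1 - 4b^2 <= (2d)^(-ln 4), and d (2d)^(-ln 4) <= 7/16 because
   ln 2 >= 5/8.  Hence the signed agreement s of the first N output bits with
   z has mean >= 3N/4 under f(B_b^l), and the test (s/N)^2 >= 2s/N - 1 has
   mean >= 1/2.  Under (X, g(X)) these N bits are uniform, so s is a sum of N
   independent fair signs, E[s^2] = N and the test has mean 1/N.  A
   [0,1]-valued test separates two laws by at most their total variation
   distance. *)

Section Numerics.
Variable R : realType.

Lemma expR_le_inv1B (x : R) : x < 1 -> expR x <= (1 - x)^-1.
Proof.
move=> x_lt1; rewrite -[expR x]invrK -expRN.
rewrite lef_pV2 ?posrE ?expR_gt0 ?subr_gt0 //.
exact: expR_ge1Dx.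
Qed.

Lemma ln2_ge58 : 5/8 <= ln (2 : R).
Proof.
have e16 : expR (1/16 : R) <= 16/15.
  apply: le_trans (expR_le_inv1B _) _; first lra.
  by rewrite (_ : 1 - 1/16 = (16/15)^-1) ?invrK //; field.
have e58 : expR (5/8 : R) <= 2.
  rewrite (_ : 5/8 = 1/16 * 10%:R); last by rewrite -[10%:R]/(10 : R); lra.
  rewrite expRM_natr; apply: (le_trans (y := (16/15) ^+ 10)).
    by rewrite lerXn2r ?nnegrE ?expR_ge0 //; lra.
  by rewrite expr_div_n ler_pdivrMr ?exprn_gt0 //; lra.
by rewrite -(expRK (5/8)) ler_ln ?posrE ?expR_gt0.
Qed.

Lemma mul_powR_ln4_le (x : R) : 2 <= x -> x * x `^ (- ln 4) <= 7/8.
Proof.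
move=> x_ge2; have x_gt0 : 0 < x by lra.
have l2 := ln2_ge58; set l := ln (2 : R) in l2.
have ln4 : ln (4 : R) = 2 * l.
  have -> : (4 : R) = 2 ^+ 2 by rewrite expr2; lra.
  by rewrite lnXn // mulr_natl.
have lx : l <= ln x by rewrite ler_ln ?posrE; lra.
rewrite /powR (negbTE (lt0r_neq0 x_gt0)) -{1}(lnK x_gt0) -expRD ln4.
have e532 : expR (- (5/32) : R) <= 7/8.
  apply: le_trans (expR_le_inv1B _) _; first lra.
  by rewrite (_ : 1 - - (5/32) = (32/37)^-1) ?invrK; [lra | field].
apply: le_trans e532; rewrite ler_expR.
have h1 : (ln x - l) * (1 - 2 * l) <= 0 by rewrite mulr_ge0_le0 ?subr_ge0 //; lra.
have h2 : 0 <= (l - 5/8) * (2 * l + 1/4) by rewrite mulr_ge0 //; lra.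
nra.
Qed.

Lemma bern_minority_le (d : nat) (b : R) : (1 <= d)%N ->
  -(1/2) <= b <= 1/2 -> (1/4) * (1 - powR (2 * d%:R) (- ln 4)) <= b ^+ 2 ->
  d%:R * bern_pmf b (~~ (b < 0)) <= 1/8.
Proof.
move=> d_ge1 /andP[b_ge b_le] hb2.
have D_ge1 : 1 <= d%:R :> R by rewrite ler1n.
set P := powR _ _ in hb2.
have hP : 2 * d%:R * P <= 7/8 by apply: mul_powR_ln4_le; lra.
have {hb2} hP2 : 1 - 4 * b ^+ 2 <= P by lra.
set p := bern_pmf b _.
have [p_ge0 p_le pE] : [/\ 0 <= p, p <= 1/2 & 4 * p * (1 - p) = 1 - 4 * b ^+ 2].
  by rewrite /p /bern_pmf; case: ltrP => /= b0; split; try lra; ring.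
have {hP} hPd : P * d%:R <= 7/16 by lra.
case: (lerP p (1/8)) => p_small.
  have : 7/2 * p * d%:R <= P * d%:R by nra.
  lra.
nra.
Qed.

End Numerics.

Section BernoulliProduct.
Variables (R : realType) (b : R).

Definition bern_prod (n : nat) (x : bits n) : R := \prod_(i < n) bern_pmf b (x i).

Lemma sum_bern_pmf : \sum_c bern_pmf b c = 1.
Proof. rewrite big_bool /bern_pmf /=; lra. Qed.

Lemma sum_bern_prod_mul_prod n (W : 'I_n -> bool -> R) :
  \sum_(x : bits n) bern_prod x * \prod_i W i (x i) =
  \prod_i \sum_c bern_pmf b c * W i c.
Proof.
rewrite bigA_distr_bigA /=; apply: eq_bigr => x _.
by rewrite /bern_prod -big_split.
Qed.

Lemma sum_bern_prod n : \sum_(x : bits n) bern_prod x = 1.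
Proof.
pose W (i : 'I_n) (c : bool) : R := 1.
transitivity (\sum_(x : bits n) bern_prod x * \prod_i W i (x i)).
  by apply: eq_bigr => x _; rewrite big1_eq mulr1.
rewrite (sum_bern_prod_mul_prod W); apply: big1 => i _.
by under eq_bigr do rewrite mulr1; exact: sum_bern_pmf.
Qed.

Lemma sum_bern_prod_coord n (k : 'I_n) (w : bool -> R) :
  \sum_(x : bits n) bern_prod x * w (x k) = \sum_c bern_pmf b c * w c.
Proof.
pose W i c := if i == k then w c else 1.
transitivity (\sum_(x : bits n) bern_prod x * \prod_i W i (x i)).
  by apply: eq_bigr => x _; rewrite -big_mkcond big_pred1_eq.
rewrite (sum_bern_prod_mul_prod W) (bigD1 k) //= [X in _ * X]big1 => [|i /negbTE ik].
  by rewrite /W eqxx mulr1.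
by rewrite /W ik; under eq_bigr do rewrite mulr1; exact: sum_bern_pmf.
Qed.

Lemma sum_bern_prod_coord2 n (j k : 'I_n) (u v : bool -> R) : j != k ->
  \sum_(x : bits n) bern_prod x * (u (x j) * v (x k)) =
  (\sum_c bern_pmf b c * u c) * (\sum_c bern_pmf b c * v c).
Proof.
move=> jk.
pose W i c := (if i == j then u c else 1) * (if i == k then v c else 1).
transitivity (\sum_(x : bits n) bern_prod x * \prod_i W i (x i)).
  by apply: eq_bigr => x _; rewrite big_split /= -!big_mkcond !big_pred1_eq.
have kj : k != j by rewrite eq_sym.
rewrite (sum_bern_prod_mul_prod W) (bigD1 j) // (bigD1 k) //=.
rewrite [X in _ * (_ * X)]big1 => [|i /andP[/negbTE ij /negbTE ik]].
  rewrite mulr1 /W !eqxx (negbTE jk) (negbTE kj).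
  by congr (_ * _); apply: eq_bigr => c _; rewrite (mulr1, mul1r).
by rewrite /W ij ik; under eq_bigr do rewrite !mulr1; exact: sum_bern_pmf.
Qed.

Lemma sum_bern_prod_sqr_centered n (W : 'I_n -> bool -> R) :
    (forall j, \sum_c bern_pmf b c * W j c = 0) ->
  \sum_(x : bits n) bern_prod x * (\sum_j W j (x j)) ^+ 2 =
  \sum_j \sum_c bern_pmf b c * W j c ^+ 2.
Proof.
move=> centered.
under eq_bigr do rewrite expr2 mulr_suml mulr_sumr.
rewrite exchange_big; apply: eq_bigr => j _ /=.
under eq_bigr do rewrite !mulr_sumr.
rewrite exchange_big (bigD1 j) //= [X in _ + X]big1 => [|k kj].
  rewrite addr0 (sum_bern_prod_coord _ (fun c => W j c ^+ 2)).
  by apply: eq_bigr => x _; rewrite expr2.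
by rewrite sum_bern_prod_coord2 1?eq_sym // centered mul0r.
Qed.

Hypothesis b_bound : -(1/2) <= b <= 1/2.

Lemma bern_pmf_ge0 c : 0 <= bern_pmf b c.
Proof. by move: b_bound; rewrite /bern_pmf; case: c => /andP[]; lra. Qed.

Lemma bern_prod_ge0 n (x : bits n) : 0 <= bern_prod x.
Proof. by apply: prodr_ge0 => i _; exact: bern_pmf_ge0. Qed.

End BernoulliProduct.

Lemma bern_prod0 (R : realType) n (x : bits n) : bern_prod (0 : R) x = (2 ^+ n)^-1.
Proof.
rewrite /bern_prod (eq_bigr (fun _ => 2^-1)) => [|i _].
  by rewrite prodr_const card_ord exprVn.
by rewrite /bern_pmf subr0 addr0 div1r; case: (x i).
Qed.

Lemma sum_mul_fiber (R : realType) (X Y : finType) (phi : X -> Y) (G : Y -> R)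
    (w : X -> R) :
  \sum_y G y * \sum_(x | phi x == y) w x = \sum_x w x * G (phi x).
Proof.
rewrite (partition_big phi xpredT) //=; apply: eq_bigr => y _.
by rewrite mulr_sumr; apply: eq_bigr => x /eqP <-; rewrite mulrC.
Qed.

Lemma push_bern_expect (R : realType) l m (b : R) (f : bits l -> bits m)
    (h : bits m -> R) :
  \sum_y h y * push_bern b f y = \sum_x bern_prod b x * h (f x).
Proof. exact: sum_mul_fiber. Qed.

Lemma graph_law_expect (R : realType) N (g : bits N -> bool) (h : bits N.+1 -> R) :
  \sum_y h y * graph_law g y = \sum_x bern_prod 0 x * h (append_bit x (g x)).
Proof.
rewrite (sum_mul_fiber (fun x => append_bit x (g x)) h (fun=> (2 ^+ N)^-1)).
by apply: eq_bigr => x _; rewrite bern_prod0.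
Qed.

Lemma sum_push_bern (R : realType) l m (b : R) (f : bits l -> bits m) :
  \sum_y push_bern b f y = 1.
Proof. by rewrite -(sum_bern_prod b l) (partition_big f xpredT). Qed.

Lemma sum_graph_law {R : realType} N (g : bits N -> bool) :
  \sum_y graph_law g y = 1 :> R.
Proof.
rewrite -(sum_bern_prod 0 N) (partition_big (fun x => append_bit x (g x)) xpredT) //.
by apply: eq_bigr => y _; apply: eq_bigr => x _; rewrite bern_prod0.
Qed.

Lemma tvd_ge_test (R : realType) (T : finType) (P Q h : T -> R) :
    \sum_t P t = \sum_t Q t -> (forall t, 0 <= h t <= 1) ->
  \sum_t h t * P t - \sum_t h t * Q t <= tvd P Q.
Proof.
move=> sumPQ h01.
have split_test t : h t * P t - h t * Q t =
    1/2 * ((2 * h t - 1) * (P t - Q t)) + 1/2 * (P t - Q t) by field.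
rewrite -sumrB (eq_bigr _ (fun t _ => split_test t)) big_split /=.
rewrite -[X in _ + X]mulr_sumr sumrB sumPQ subrr mulr0 addr0 -mulr_sumr.
apply: ler_wpM2l; first lra; apply: ler_sum => t _.
apply: le_trans (ler_norm _) _; rewrite normrM ler_piMl //.
by have /andP[h0 h1] := h01 t; rewrite ler_norml; apply/andP; split; lra.
Qed.

Lemma local_neq_le_sum_neq (R : realType) l m (f : bits l -> bits m) (j : 'I_m)
    (S : {set 'I_l}) (x x' : bits l) :
    (forall y y' : bits l, (forall i, i \in S -> y i = y' i) -> f y j = f y' j) ->
  ((f x j != f x' j)%:R : R) <= \sum_(i in S) (x i != x' i)%:R.
Proof.
move=> locS; case: (boolP [forall i in S, x i == x' i]) => [/forall_inP agree|].
  rewrite (locS x x') => [|i /agree /eqP //].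
  by rewrite eqxx; apply: sumr_ge0 => i _; exact: ler0n.
case/forall_inPn => i0 i0S xi0.
rewrite (bigD1 i0) //= xi0 -[X in X <= _]addr0 lerD ?ler_nat ?leq_b1 //.
by apply: sumr_ge0 => i _; exact: ler0n.
Qed.

Lemma local_flip_expect (R : realType) l m d (f : bits l -> bits m) (b : R)
    (c : bool) (j : 'I_m) : -(1/2) <= b <= 1/2 -> local d f ->
  \sum_x bern_prod b x * (f x j != f [ffun=> c] j)%:R <= d%:R * bern_pmf b (~~ c).
Proof.
move=> b_bound /(_ j) [S [cardS locS]].
have miss : \sum_c' bern_pmf b c' * (c' != c)%:R = bern_pmf b (~~ c).
  by rewrite big_bool; case: (c); rewrite /= mulr0 mulr1 ?addr0 ?add0r.
apply: (le_trans (y := \sum_x bern_prod b x * \sum_(i in S) (x i != c)%:R)).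
  apply: ler_sum => x _; apply: ler_wpM2l; first exact: bern_prod_ge0.
  by have := local_neq_le_sum_neq R x [ffun=> c] locS; under eq_bigr do rewrite ffunE.
under eq_bigr do rewrite mulr_sumr.
rewrite exchange_big /=.
under eq_bigr do rewrite (sum_bern_prod_coord _ _ (fun c' => (c' != c)%:R)) miss.
rewrite sumr_const -[X in X <= _]mulr_natl.
by apply: ler_wpM2r; [exact: bern_pmf_ge0 | rewrite ler_nat].
Qed.

Definition agree_sign {R : realType} (c c' : bool) : R := if c == c' then 1 else -1.

Lemma agree_signE {R : realType} (c c' : bool) :
  agree_sign c c' = 1 - 2 * (c != c')%:R :> R.
Proof. by rewrite /agree_sign; case: eqP => _; rewrite /=; lra. Qed.

Section AgreementTest.
Context {R : realType} {N : nat} (z : bits N.+1).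
Hypothesis N_gt0 : (0 < N)%N.

Definition agree_bit (j : 'I_N) (y : bits N.+1) : R :=
  agree_sign (y (lift ord_max j)) (z (lift ord_max j)).

Definition agreement (y : bits N.+1) : R := \sum_(j < N) agree_bit j y.

Definition agreement_test (y : bits N.+1) : R := (agreement y / N%:R) ^+ 2.

Lemma agreement_test_01 y : 0 <= agreement_test y <= 1.
Proof.
rewrite /agreement_test sqr_ge0 /= -real_normK ?num_real // exprn_ile1 //.
rewrite normrM normfV normr_nat ler_pdivrMr ?ltr0n // mul1r.
apply: le_trans (ler_norm_sum _ _ _) _.
have -> : N%:R = \sum_(j < N) (1 : R) by rewrite sumr_const card_ord.
apply: ler_sum => j _.
by rewrite /agree_bit /agree_sign; case: eqP; rewrite ?normrN normr1.
Qed.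

Lemma graph_law_agreement_test (g : bits N -> bool) :
  \sum_y agreement_test y * graph_law g y = N%:R^-1.
Proof.
pose W (j : 'I_N) (c : bool) : R := agree_sign c (z (lift ord_max j)).
have agreementE x c : agreement (append_bit x c) = \sum_j W j (x j).
  by apply: eq_bigr => j _; rewrite /agree_bit ffunE liftK.
rewrite graph_law_expect.
under eq_bigr do rewrite /agreement_test agreementE expr_div_n mulrA.
rewrite -mulr_suml sum_bern_prod_sqr_centered => [|j]; last first.
  by rewrite big_bool /W /agree_sign /bern_pmf; case: (z _); rewrite /=; lra.
rewrite (eq_bigr (fun=> 1)) => [|j _].
  by rewrite sumr_const card_ord; field; rewrite pnatr_eq0 -lt0n.
rewrite -(sum_bern_pmf 0); apply: eq_bigr => c _.
by rewrite /W /agree_sign; case: eqP; rewrite ?sqrrN expr1n mulr1.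
Qed.

Lemma expect_agreement_test_ge (X : finType) (w : X -> R) (phi : X -> bits N.+1) a :
    (forall x, 0 <= w x) -> \sum_x w x = 1 ->
    (forall j, a <= \sum_x w x * agree_bit j (phi x)) ->
  2 * a - 1 <= \sum_x w x * agreement_test (phi x).
Proof.
move=> w_ge0 w_sum1 sign_ge.
have tangent x : 2 * (agreement (phi x) / N%:R) - 1 <= agreement_test (phi x).
  rewrite /agreement_test; move: (_ / _) => u.
  by have := sqr_ge0 (u - 1); rewrite !expr2; nra.
apply: le_trans (ler_sum _ (fun x _ => ler_wpM2l (w_ge0 x) (tangent x))).
pose E := \sum_j \sum_x w x * agree_bit j (phi x).
have -> : \sum_x w x * (2 * (agreement (phi x) / N%:R) - 1) = 2 / N%:R * E - 1.
  have expand x : w x * (2 * (agreement (phi x) / N%:R) - 1) =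
      2 / N%:R * (w x * agreement (phi x)) - w x by ring.
  rewrite (eq_bigr _ (fun x _ => expand x)).
  rewrite sumrB w_sum1 -mulr_sumr /E exchange_big /=.
  by congr (_ * _ - _); apply: eq_bigr => x _; rewrite mulr_sumr.
have NaE : a *+ N <= E.
  by rewrite -[N in a *+ N]card_ord -sumr_const; apply: ler_sum => j _; exact: sign_ge.
rewrite lerD2r; apply: le_trans (ler_wpM2l _ NaE); last by rewrite divr_ge0 ?ler0n.
rewrite (_ : 2 / N%:R * (a *+ N) = 2 * a) // -mulr_natr.
by field; rewrite pnatr_eq0 -lt0n.
Qed.

End AgreementTest.

Theorem lemmaC1 (R : realType) (d N l : nat) (hd : (1 <= d)%N) (hN : (1 <= N)%N)
  (f : bits l -> bits N.+1) (hf : local d f) (b : R)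
  (hb : -(1/2) <= b <= 1/2)
  (hb2 : b ^+ 2 >= (1/4) * (1 - powR (2 * d%:R) (- ln 4))) :
  forall g : bits N -> bool,
    tvd (push_bern b f) (graph_law g) >= 1/2 - 1 / N%:R.
Proof.
move=> g.
set c := b < 0.
have minority : d%:R * bern_pmf b (~~ c) <= 1/8 by exact: bern_minority_le.
pose z := f [ffun=> c].
have agree_ge (j : 'I_N) : 3/4 <= \sum_x bern_prod b x * agree_bit z j (f x).
  have flip_le := local_flip_expect c (lift ord_max j) hb hf.
  under eq_bigr do rewrite /agree_bit agree_signE mulrBr mulr1 mulrCA.
  rewrite sumrB sum_bern_prod -mulr_sumr; lra.
have test_push : 1/2 <= \sum_y agreement_test z y * push_bern b f y.
  have w_ge0 := bern_prod_ge0 hb (n := l).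
  have := expect_agreement_test_ge hN w_ge0 (sum_bern_prod b l) agree_ge.
  by rewrite push_bern_expect; lra.
have mass_eq := etrans (sum_push_bern b f) (esym (sum_graph_law g)).
have := tvd_ge_test mass_eq (agreement_test_01 z hN).
by rewrite graph_law_agreement_test // div1r; lra.
Qed.
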